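(* Stutter-equivalence of teams has the following properties: (1) If $T$ is a stutter-free team, then $T=T[f]$ for every stuttering function $f$ of $T$. (2) For every team $T$ there is a unique stutter-free team that is stutter-equivalent to $T$. (3) Stutter-equivalence $\equiv_{\mathrm{st}}$ is reflexive, symmetric and transitive on teams. (4) Every $\equiv_{\mathrm{st}}$-equivalence class contains exactly one stutter-free team.
   Context: A trace is an infinite sequence $t=t(0)t(1)\cdots$ of subsets of a set $\mathrm{AP}$ of propositions; a team is a set of traces. A stuttering function of a trace $t$ is a strictly increasing function $f:\mathbb N\to\mathbb N$ with $f(0)=0$ such that $t(f(k))=t(f(k)+1)=\cdots=t(f(k+1)-1)$ for all $k\ge0$. A stuttering function of a team $T$ is a function that is a stuttering function of every $t\in T$. For $f:\mathbb N\to\mathbb N$, $t[f]:=t(f(0))t(f(1))t(f(2))\cdots$ and $T[f]:=\{t[f]:t\in T\}$. Teams $T,T'$ are stutter-equivalent ($T\equiv_{\mathrm{st}}T'$) if there are a stuttering function $f$ of $T$ and a stuttering function $f'$ of $T'$ with $T[f]=T'[f']$. A team $T$ has a stuttering position $i$ if $t(i)=t(i+1)$ for all $t\in T$, but there exist $t\in T$ and $j>i+1$ with $t(i)\neq t(j)$. A team with no stuttering position is stutter-free. *)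

From Stdlib Require Import Arith.

(* A subset of AP is a predicate on AP; a trace is an infinite sequence
   of subsets of AP; a team is a set of traces. *)
Definition trace (AP : Type) := nat -> (AP -> Prop).
Definition team (AP : Type) := trace AP -> Prop.

Definition stuttering_fun {AP : Type} (t : trace AP) (f : nat -> nat) : Prop :=
  f 0 = 0 /\
  (forall m n, m < n -> f m < f n) /\
  (forall k i, f k <= i < f (S k) -> t i = t (f k)).

Definition team_stuttering_fun {AP : Type} (T : team AP) (f : nat -> nat) : Prop :=
  forall t, T t -> stuttering_fun t f.

Definition trace_sub {AP : Type} (t : trace AP) (f : nat -> nat) : trace AP :=
  fun k => t (f k).

Definition team_sub {AP : Type} (T : team AP) (f : nat -> nat) : team AP :=
  fun u => exists t, T t /\ u = trace_sub t f.

Definition stutter_equiv {AP : Type} (T T' : team AP) : Prop :=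
  exists f f', team_stuttering_fun T f /\ team_stuttering_fun T' f' /\
               team_sub T f = team_sub T' f'.

Definition stuttering_position {AP : Type} (T : team AP) (i : nat) : Prop :=
  (forall t, T t -> t i = t (S i)) /\
  (exists t j, T t /\ S i < j /\ t i <> t j).

Definition stutter_free {AP : Type} (T : team AP) : Prop :=
  forall i, ~ stuttering_position T i.

From Stdlib Require Import Arith Lia Wf_nat Classical ClassicalEpsilon
  FunctionalExtensionality PropExtensionality.

(* For a team T let [canon T] enumerate 0 and, after each position p, the
   position following the first non-stuttering position >= p.  It is a
   stuttering function of T, and the reduct [nf T := T[canon T]] is
   stutter-free.  The heart of the argument is the uniqueness of stutter-free
   reducts: if T[a] and T[b] are both stutter-free then T[a] = T[b], proved by
   showing inductively that a and b agree until T becomes constant.  Since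
   stuttering functions compose (T[f][g] = T[f o g]) and preserve
   stutter-freeness, this yields
     - stutter_free T -> nf T = T, and nf (T[f]) = nf T,
     - T ==st T'  <->  nf T = nf T'.
   All four parts of the theorem are then short consequences: (3) because
   ==st is the kernel of nf, and (2), (4) with nf T as the unique witness. *)

Section StutterEquivalence.

Variable AP : Type.

Lemma team_ext (T T' : team AP) : (forall u, T u <-> T' u) -> T = T'.
Proof.
  intros H. apply functional_extensionality; intro u.
  apply propositional_extensionality, H.
Qed.

Lemma least_witness (P : nat -> Prop) :
  (exists n, P n) -> exists n, P n /\ forall m, P m -> n <= m.
Proof.
  intros Hex.
  destruct (dec_inh_nat_subset_has_unique_least_element P
              (fun n => classic (P n)) Hex) as [n [Hn _]].
  exists n; exact Hn.
Qed.

Definition strictly_increasing (f : nat -> nat) : Prop :=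
  forall m n, m < n -> f m < f n.

Lemma strictly_increasing_step (f : nat -> nat) :
  (forall n, f n < f (S n)) -> strictly_increasing f.
Proof.
  intros Hstep m n Hmn. induction Hmn as [|n _ IH].
  - apply Hstep.
  - specialize (Hstep n). lia.
Qed.

Lemma strictly_increasing_reflect (f : nat -> nat) m n :
  strictly_increasing f -> f m < f n -> m < n.
Proof.
  intros Hf Hlt. destruct (Nat.lt_ge_cases m n) as [|Hnm]; [assumption|].
  destruct (Nat.eq_dec n m) as [->|Hne]; [lia|].
  specialize (Hf n m ltac:(lia)). lia.
Qed.

Lemma strictly_increasing_locate (f : nat -> nat) :
  f 0 = 0 -> strictly_increasing f -> forall i, exists m, f m <= i < f (S m).
Proof.
  intros H0 Hf i. induction i as [|i [m Hm]].
  - exists 0. rewrite H0. specialize (Hf 0 1 ltac:(lia)). lia.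
  - destruct (Nat.eq_dec (S i) (f (S m))) as [E|Ne].
    + exists (S m). specialize (Hf (S m) (S (S m)) ltac:(lia)). lia.
    + exists m. lia.
Qed.

Lemma stuttering_block_value (t : trace AP) (f : nat -> nat) :
  stuttering_fun t f ->
  forall x y i, f x <= i < f y -> exists m, x <= m < y /\ t i = t (f m).
Proof.
  intros [H0 [Hf Hblock]] x y i Hi.
  destruct (strictly_increasing_locate f H0 Hf i) as [m Hm].
  exists m. split; [|apply Hblock, Hm].
  assert (x < S m) by (apply (strictly_increasing_reflect f); auto; lia).
  assert (m < y) by (apply (strictly_increasing_reflect f); auto; lia).
  lia.
Qed.

Lemma team_sub_comp (T : team AP) f g :
  team_sub (team_sub T f) g = team_sub T (fun k => f (g k)).
Proof.
  apply team_ext; intro u; split.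
  - intros [v [[t [Ht ->]] ->]]. exists t. split; [exact Ht|reflexivity].
  - intros [t [Ht ->]]. exists (trace_sub t f).
    split; [exists t; split; [exact Ht|reflexivity]|reflexivity].
Qed.

Lemma stuttering_comp (T : team AP) f g :
  team_stuttering_fun T f -> team_stuttering_fun (team_sub T f) g ->
  team_stuttering_fun T (fun k => f (g k)).
Proof.
  intros Hf Hg t Ht.
  destruct (Hf t Ht) as [f0 [fmono _]].
  destruct (Hg (trace_sub t f) (ex_intro _ t (conj Ht eq_refl)))
    as [g0 [gmono gblock]].
  split; [rewrite g0; exact f0|split].
  - intros m n Hmn. apply fmono, gmono, Hmn.
  - intros k i Hi.
    destruct (stuttering_block_value t f (Hf t Ht) (g k) (g (S k)) i Hi)
      as [m [Hm ->]].
    exact (gblock k m Hm).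
Qed.

Lemma stuttering_id (T : team AP) : team_stuttering_fun T (fun k => k).
Proof.
  intros t _. split; [reflexivity|split; [intros m n H; exact H|]].
  intros k i Hi. replace i with k by lia. reflexivity.
Qed.

Lemma team_sub_id (T : team AP) : team_sub T (fun k => k) = T.
Proof.
  apply team_ext; intro u; split.
  - intros [t [Ht ->]]. exact Ht.
  - intros Hu. exists u. split; [exact Hu|reflexivity].
Qed.

Lemma constant_on_stuttering_run (T : team AP) p q :
  (forall r, p <= r < q -> stuttering_position T r) ->
  forall t, T t -> forall i, p <= i <= q -> t i = t p.
Proof.
  intros Hrun t Ht.
  assert (Hoffset : forall n, p + n <= q -> t (p + n) = t p).
  { induction n as [|n IH]; intros Hn.
    - now rewrite Nat.add_0_r.
    - rewrite <- IH by lia. replace (p + S n) with (S (p + n)) by lia.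
      symmetry. apply (proj1 (Hrun (p + n) ltac:(lia))), Ht. }
  intros i Hi. replace i with (p + (i - p)) by lia. apply Hoffset. lia.
Qed.

Lemma stuttering_position_of_sub (T : team AP) f k :
  team_stuttering_fun T f -> stuttering_position (team_sub T f) k ->
  stuttering_position T (pred (f (S k))).
Proof.
  intros Hf [Hsame [u [j [[t [Ht ->]] [Hj Hdiff]]]]].
  set (p := pred (f (S k))).
  assert (Hlast : forall t', T t' -> t' p = t' (f k) /\ S p = f (S k)).
  { intros t' Ht'. destruct (Hf t' Ht') as [_ [Hmono Hblock]].
    specialize (Hmono k (S k) ltac:(lia)).
    split; [apply Hblock|]; unfold p; lia. }
  split.
  - intros t' Ht'. destruct (Hlast t' Ht') as [-> ->].
    exact (Hsame _ (ex_intro _ t' (conj Ht' eq_refl))).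
  - exists t, (f j). destruct (Hlast t Ht) as [Hp Hsp].
    destruct (Hf t Ht) as [_ [Hmono _]].
    split; [exact Ht|split].
    + rewrite Hsp. apply Hmono, Hj.
    + rewrite Hp. exact Hdiff.
Qed.

Lemma stutter_free_sub (T : team AP) f :
  team_stuttering_fun T f -> stutter_free T -> stutter_free (team_sub T f).
Proof.
  intros Hf Hfree k Hk. exact (Hfree _ (stuttering_position_of_sub T f k Hf Hk)).
Qed.

Definition constant_from (T : team AP) (q : nat) : Prop :=
  forall t, T t -> forall j, q <= j -> t j = t q.

Lemma stutter_free_reduct_step (T : team AP) a k :
  team_stuttering_fun T a -> stutter_free (team_sub T a) ->
  constant_from T (a k) \/ exists t, T t /\ t (a (S k)) <> t (a k).
Proof.
  intros Ha Hfree.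
  destruct (classic (exists t, T t /\ t (a (S k)) <> t (a k))) as [|Hnone];
    [right; assumption|left].
  assert (Hsame : forall t, T t -> t (a k) = t (a (S k))).
  { intros t Ht. apply NNPP; intro C. apply Hnone. exists t. auto. }
  assert (Hlater : forall t, T t -> forall m, k <= m -> t (a m) = t (a k)).
  { intros t Ht m Hm.
    destruct (Nat.eq_dec m k) as [->|]; [reflexivity|].
    destruct (Nat.eq_dec m (S k)) as [->|]; [symmetry; apply Hsame, Ht|].
    apply NNPP; intro C. apply (Hfree k). split.
    - intros u [t' [Ht' ->]]. apply Hsame, Ht'.
    - exists (trace_sub t a), m. split; [exists t; auto|]. split; [lia|].
      intro E. apply C. symmetry. exact E. }
  intros t Ht j Hj.
  destruct (Ha t Ht) as [a0 [Hmono Hblock]].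
  destruct (strictly_increasing_locate a a0 Hmono j) as [m Hm].
  assert (k < S m) by (apply (strictly_increasing_reflect a); auto; lia).
  rewrite (Hblock m j Hm). apply Hlater; [exact Ht|lia].
Qed.

Lemma stutter_free_reducts_agree (T : team AP) a b :
  team_stuttering_fun T a -> team_stuttering_fun T b ->
  stutter_free (team_sub T a) -> stutter_free (team_sub T b) ->
  team_sub T a = team_sub T b.
Proof.
  intros Ha Hb Fa Fb.
  assert (Hinv : forall t, T t -> forall k,
             a k = b k \/ exists q, q <= a k /\ q <= b k /\ constant_from T q).
  { intros t0 Ht0 k. destruct (Ha t0 Ht0) as [a0 [amono _]].
    destruct (Hb t0 Ht0) as [b0 [bmono _]].
    induction k as [|k IH]; [left; congruence|].
    specialize (amono k (S k) ltac:(lia)). specialize (bmono k (S k) ltac:(lia)).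
    destruct IH as [E|[q [Hqa [Hqb Hq]]]]; cycle 1.
    { right. exists q. repeat split; auto; lia. }
    destruct (stutter_free_reduct_step T a k Ha Fa) as [Hc|[ta [Hta Da]]].
    { right. exists (a k). repeat split; auto; lia. }
    destruct (stutter_free_reduct_step T b k Hb Fb) as [Hc|[tb [Htb Db]]].
    { right. exists (b k). repeat split; auto; lia. }
    destruct (lt_eq_lt_dec (a (S k)) (b (S k))) as [[L|L]|L].
    - exfalso. apply Da. destruct (Hb ta Hta) as [_ [_ Hblock]].
      rewrite E. apply Hblock. lia.
    - left; exact L.
    - exfalso. apply Db. destruct (Ha tb Htb) as [_ [_ Hblock]].
      rewrite <- E. apply Hblock. lia. }
  assert (Hagree : forall t, T t -> trace_sub t a = trace_sub t b).
  { intros t Ht. apply functional_extensionality; intro k. unfold trace_sub.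
    destruct (Hinv t Ht k) as [->|[q [Hqa [Hqb Hq]]]]; [reflexivity|].
    now rewrite (Hq t Ht _ Hqa), (Hq t Ht _ Hqb). }
  apply team_ext; intro u; split; intros [t [Ht ->]]; exists t;
    split; auto; rewrite Hagree; auto.
Qed.

(* Beyond every position there is a non-stuttering one: otherwise every trace
   would be constant from there on, contradicting the definition. *)
Lemma exists_nonstuttering_position (T : team AP) p :
  exists s, p <= s /\ ~ stuttering_position T s.
Proof.
  apply NNPP; intro Hnone.
  assert (Hall : forall r, p <= r -> stuttering_position T r).
  { intros r Hr. apply NNPP; intro C. apply Hnone. eauto. }
  destruct (Hall p (le_n p)) as [_ [t [j [Ht [Hj Hdiff]]]]].
  apply Hdiff. symmetry.
  apply (constant_on_stuttering_run T p j); [intros r Hr; apply Hall|..]; auto; lia.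
Qed.

Definition next_break (T : team AP) (p : nat) : nat :=
  proj1_sig (constructive_indefinite_description _
    (least_witness _ (exists_nonstuttering_position T p))).

Lemma next_break_spec (T : team AP) p :
  p <= next_break T p /\ ~ stuttering_position T (next_break T p) /\
  forall r, p <= r < next_break T p -> stuttering_position T r.
Proof.
  unfold next_break.
  destruct (constructive_indefinite_description _ _) as [s [[Hps Hs] Hleast]].
  simpl. split; [exact Hps|split; [exact Hs|]].
  intros r Hr. apply NNPP; intro C. specialize (Hleast r (conj (proj1 Hr) C)). lia.
Qed.

Fixpoint canon (T : team AP) (k : nat) : nat :=
  match k with
  | 0 => 0
  | S k => S (next_break T (canon T k))
  end.

(* Between canon T k and its successor all positions are stuttering. *)
Lemma canon_stuttering (T : team AP) : team_stuttering_fun T (canon T).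
Proof.
  intros t Ht. split; [reflexivity|split].
  - apply strictly_increasing_step. intro n. simpl.
    pose proof (proj1 (next_break_spec T (canon T n))). lia.
  - intros k i Hi. simpl in Hi.
    destruct (next_break_spec T (canon T k)) as [_ [_ Hrun]].
    apply (constant_on_stuttering_run T _ (next_break T (canon T k))); auto; lia.
Qed.

Definition nf (T : team AP) : team AP := team_sub T (canon T).

(* A stuttering position of nf T would make some next_break a stuttering
   position of T. *)
Lemma nf_stutter_free (T : team AP) : stutter_free (nf T).
Proof.
  intros k Hk.
  pose proof (stuttering_position_of_sub T (canon T) k (canon_stuttering T) Hk) as Hpos.
  simpl in Hpos. exact (proj1 (proj2 (next_break_spec T (canon T k))) Hpos).
Qed.

Lemma stutter_free_reduct_is_nf (T : team AP) f :
  team_stuttering_fun T f -> stutter_free (team_sub T f) -> team_sub T f = nf T.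
Proof.
  intros Hf Hfree.
  apply stutter_free_reducts_agree; [exact Hf|apply canon_stuttering|exact Hfree|].
  apply nf_stutter_free.
Qed.

Lemma nf_of_stutter_free (T : team AP) : stutter_free T -> nf T = T.
Proof.
  intros Hfree. rewrite <- (team_sub_id T) at 2.
  symmetry. apply stutter_free_reduct_is_nf; [apply stuttering_id|].
  now rewrite team_sub_id.
Qed.

Lemma nf_team_sub (T : team AP) f :
  team_stuttering_fun T f -> nf (team_sub T f) = nf T.
Proof.
  intros Hf. unfold nf at 1. rewrite team_sub_comp.
  apply stutter_free_reduct_is_nf.
  - apply stuttering_comp; auto using canon_stuttering.
  - rewrite <- team_sub_comp. apply nf_stutter_free.
Qed.

Lemma stutter_equiv_iff_nf (T T' : team AP) :
  stutter_equiv T T' <-> nf T = nf T'.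
Proof.
  split.
  - intros [f [f' [Hf [Hf' E]]]].
    rewrite <- (nf_team_sub T f Hf), <- (nf_team_sub T' f' Hf'), E. reflexivity.
  - intros E. exists (canon T), (canon T').
    split; [apply canon_stuttering|split; [apply canon_stuttering|exact E]].
Qed.

Lemma nf_idempotent (T : team AP) : nf (nf T) = nf T.
Proof. apply nf_of_stutter_free, nf_stutter_free. Qed.

Lemma stutter_free_same_nf (T T' : team AP) :
  stutter_free T' -> nf T' = nf T -> T' = nf T.
Proof. intros Hfree E. rewrite <- E. symmetry. apply nf_of_stutter_free, Hfree. Qed.

End StutterEquivalence.

Theorem mainTheorem6 (AP : Type) :
  (* (1) *)
  (forall (T : team AP), stutter_free T ->
     forall f, team_stuttering_fun T f -> T = team_sub T f) /\
  (* (2) *)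
  (forall (T : team AP), exists! T' : team AP, stutter_free T' /\ stutter_equiv T T') /\
  (* (3) *)
  ((forall (T : team AP), stutter_equiv T T) /\
   (forall (T T' : team AP), stutter_equiv T T' -> stutter_equiv T' T) /\
   (forall (T T' T'' : team AP), stutter_equiv T T' -> stutter_equiv T' T'' ->
      stutter_equiv T T'')) /\
  (* (4): the class {T' | T' ==st T} contains exactly one stutter-free team *)
  (forall (T : team AP), exists! T' : team AP, stutter_equiv T' T /\ stutter_free T').
Proof.
  repeat split.
  - intros T Hfree f Hf.
    rewrite (stutter_free_reduct_is_nf AP T f Hf (stutter_free_sub AP T f Hf Hfree)).
    symmetry. apply nf_of_stutter_free, Hfree.
  - intros T. exists (nf AP T). split.
    + split; [apply nf_stutter_free|apply stutter_equiv_iff_nf; symmetry; apply nf_idempotent].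
    + intros T' [Hfree E]. apply stutter_equiv_iff_nf in E.
      symmetry. apply stutter_free_same_nf; auto.
  - intros T. now apply stutter_equiv_iff_nf.
  - intros T T' E. apply stutter_equiv_iff_nf in E. now apply stutter_equiv_iff_nf.
  - intros T T' T'' E1 E2. apply stutter_equiv_iff_nf in E1, E2.
    apply stutter_equiv_iff_nf. congruence.
  - intros T. exists (nf AP T). split.
    + split; [apply stutter_equiv_iff_nf, nf_idempotent|apply nf_stutter_free].
    + intros T' [E Hfree]. apply stutter_equiv_iff_nf in E.
      symmetry. apply stutter_free_same_nf; auto.
Qed.
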